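(* Let $n\ge1$, fix $a\in\{0,1\}$ and a time $t\in\{0,1,\dots,t_{\max}\}$, and let $U=\{u\in\{0,\dots,t_{\max}\}:u\le t\}$. Given data $X_1,\dots,X_n\in\mathcal X$, indicators $\iota_{iu}=\mathbf 1(A_i=a,G_i^u=1)\in\{0,1\}$ and real numbers $\hat r_{iu}=\hat r_u(X_i,a)$ for $i\le n$, $u\in U$, and a norm $\|\cdot\|$ on a vector space of real functions on $\mathcal X$, and $\sigma>0$, suppose $\hat\omega\in\mathbb R^{n\times U}$ minimizes $$I(\omega)^2+\frac{\sigma^2}{nt}\sum_{i=1}^n\sum_{u\in U}\hat r_{iu}^2\iota_{iu}\omega_{iu}^2,\qquad I(\omega)=\sup_{\sum_{u\in U}\|h_u\|^2\le1}\frac1n\sum_{i=1}^n\sum_{u\in U}\big\{\hat r_{iu}h_u(X_i)-\iota_{iu}\hat r_{iu}\omega_{iu}h_u(X_i)\big\}.$$ Then for each $u\in U$, the vector $\hat\omega_u=(\hat\omega_{1u},\dots,\hat\omega_{nu})$ minimizes over $\omega_u\in\mathbb R^n$ $$I_u(\omega_u)^2+\frac{\sigma^2}{nt}\sum_{i=1}^n\hat r_{iu}^2\iota_{iu}\omega_{iu}^2,\qquad I_u(\omega_u)=\sup_{\|h_u\|\le1}\frac1n\sum_{i=1}^n\big\{\hat r_{iu}h_u(X_i)-\iota_{iu}\hat r_{iu}\omega_{iu}h_u(X_i)\big\}.$$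
   Context: Here $A_i\in\{0,1\}$ is a treatment indicator, $G_i^u=\mathbf 1(\tilde T_i\ge u)$ is an at-risk indicator, and $\hat r_u(x,a)$ are given real-valued functions; in the paper $\hat r_u(x,a)=-\hat S_t(x,a)\hat S_{u-1}(x,a)/\hat S_u(x,a)$ for an estimated survival function $\hat S$, but the statement holds for arbitrary real $\hat r_{iu}$. *)

From HB Require Import structures.
From mathcomp Require Import all_boot all_order all_algebra.
From mathcomp Require Import all_classical all_reals.
From mathcomp Require Import ereal topology normedtype.
Set Implicit Arguments. Unset Strict Implicit. Unset Printing Implicit Defensive.
Import Order.TTheory GRing.Theory Num.Theory.
Import numFieldNormedType.Exports.
Local Open Scope classical_set_scope.
Local Open Scope ring_scope.

(* Setting: H is a normed real vector space whose elements are real functions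
   on the covariate space X via the (linear, injective) evaluation map [ev].
   Index set U = {0,...,t} is modelled by 'I_t.+1.
   Data: Xs i = X_i, iota i u = iota_{iu} (a boolean, cast to {0,1}),
   r i u = hat r_{iu}, w i u = omega_{iu}. *)

Section Defs.
Variables (R : realType) (H : normedModType R) (X : Type)
  (ev : H -> X -> R) (n t : nat)
  (Xs : 'I_n -> X) (iota : 'I_n -> 'I_t.+1 -> bool) (r : 'I_n -> 'I_t.+1 -> R)
  (sigma : R).

Definition Ifull (w : 'I_n -> 'I_t.+1 -> R) : \bar R :=
  ereal_sup [set ((n%:R)^-1 * \sum_(i < n) \sum_(u < t.+1)
                   (r i u * ev (h u) (Xs i)
                    - (iota i u)%:R * r i u * w i u * ev (h u) (Xs i)))%:E
            | h in [set h : 'I_t.+1 -> H | \sum_(u < t.+1) `|h u| ^+ 2 <= 1]].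

Definition Iu (u : 'I_t.+1) (wu : 'I_n -> R) : \bar R :=
  ereal_sup [set ((n%:R)^-1 * \sum_(i < n)
                   (r i u * ev h (Xs i)
                    - (iota i u)%:R * r i u * wu i * ev h (Xs i)))%:E
            | h in [set h : H | `|h| <= 1]].

Definition objfull (w : 'I_n -> 'I_t.+1 -> R) : \bar R :=
  (Ifull w * Ifull w +
   (sigma ^+ 2 / (n%:R * t%:R) *
    \sum_(i < n) \sum_(u < t.+1) r i u ^+ 2 * (iota i u)%:R * w i u ^+ 2)%:E)%E.

Definition obju (u : 'I_t.+1) (wu : 'I_n -> R) : \bar R :=
  (Iu u wu * Iu u wu +
   (sigma ^+ 2 / (n%:R * t%:R) *
    \sum_(i < n) r i u ^+ 2 * (iota i u)%:R * wu i ^+ 2)%:E)%E.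

End Defs.

From HB Require Import structures.
From mathcomp Require Import all_boot all_order all_algebra.
From mathcomp Require Import all_classical all_reals.
From mathcomp Require Import ereal topology normedtype.
Import Order.TTheory GRing.Theory Num.Theory.
Import numFieldNormedType.Exports.
From mathcomp Require Import ring lra.
Local Open Scope ring_scope.

(* The penalized criterion separates over u.  I(omega) is the dual norm of the
   functional (h_u)_u |-> sum_u L_u(h_u) on the l2-sum of copies of the normed
   space, where L_u is the linear functional whose dual norm is I_u(omega_u);
   Cauchy-Schwarz and scaled near-maximizers show that this dual norm is
   sqrt (sum_u I_u(omega_u)^2).  Hence the full objective is the sum over u of
   the per-u objectives, and a minimizer of a finite separable sum minimizes
   each summand: change only its u-th block. *)

Set Implicit Arguments. Unset Strict Implicit.

Lemma sum_mul_le_sqrt (R : realType) (I : finType) (a b : I -> R) :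
  \sum_i b i ^+ 2 <= 1 -> \sum_i a i * b i <= Num.sqrt (\sum_i a i ^+ 2).
Proof.
move=> b_le1; set S := Num.sqrt _.
have a2_ge0 : 0 <= \sum_i a i ^+ 2 by apply: sumr_ge0 => i _; exact: sqr_ge0.
have S2 : S ^+ 2 = \sum_i a i ^+ 2 by rewrite sqr_sqrtr.
have [S0|S_gt0] := eqVneq S 0.
  have sum0 : \sum_i a i ^+ 2 = 0 by rewrite -S2 S0 expr0n.
  have a0 i : a i = 0.
    apply/eqP; rewrite -sqrf_eq0; apply/eqP.
    exact: (psumr_eq0P (fun j _ => sqr_ge0 (a j)) sum0).
  by rewrite S0 big1 // => i _; rewrite a0 mul0r.
have {}S_gt0 : 0 < S by rewrite lt_neqAle eq_sym S_gt0 sqrtr_ge0.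
(* AM-GM: [a b <= a^2 / (2 S) + S b^2 / 2], which sums to [S / 2 + S / 2]. *)
have amgm i : a i * b i <= a i ^+ 2 / (2 * S) + S * b i ^+ 2 / 2.
  rewrite -subr_ge0.
  have -> : a i ^+ 2 / (2 * S) + S * b i ^+ 2 / 2 - a i * b i
           = (a i - S * b i) ^+ 2 / (2 * S) by field; rewrite gt_eqF.
  by rewrite divr_ge0 ?sqr_ge0 // mulr_ge0 // ltW.
apply: (le_trans (ler_sum _ (fun i _ => amgm i))).
rewrite big_split /= -!mulr_suml -mulr_sumr -S2.
have -> : S ^+ 2 / (2 * S) = S / 2 by field; rewrite gt_eqF.
have : S * (\sum_i b i ^+ 2) <= S by rewrite ler_piMr // ltW.
lra.
Qed.

Section DualNorm.
Variables (R : realType) (H : normedModType R).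

Definition dual_norm (f : H -> R) : \bar R :=
  ereal_sup [set (f h)%:E | h in [set h : H | `|h| <= 1]].

Definition l2sum_dual_norm (m : nat) (L : 'I_m -> H -> R) : \bar R :=
  ereal_sup [set (\sum_(u < m) L u (h u))%:E
            | h in [set h : 'I_m -> H | \sum_(u < m) `|h u| ^+ 2 <= 1]].

Section LinearFunctional.
Variable f : H -> R.
Hypothesis f_linear : forall c h1 h2, f (c *: h1 + h2) = c * f h1 + f h2.

Lemma linfun0 : f 0 = 0.
Proof. by have := f_linear 1 0 0; rewrite scale1r addr0 mul1r; lra. Qed.

Lemma linfunZ c h : f (c *: h) = c * f h.
Proof. by rewrite -[c *: h]addr0 f_linear linfun0 addr0. Qed.

Lemma dual_norm_ge0 : (0 <= dual_norm f)%E.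
Proof. by apply: ereal_sup_ubound; exists 0; rewrite /= ?normr0 ?linfun0. Qed.

Lemma le_dual_norm c h : dual_norm f = c%:E -> f h <= c * `|h|.
Proof.
move=> fc; have [->|h_neq0] := eqVneq h 0; first by rewrite linfun0 normr0 mulr0.
have h_gt0 : 0 < `|h| by rewrite normr_gt0.
have : ((f (`|h|^-1 *: h))%:E <= dual_norm f)%E.
  apply: ereal_sup_ubound; exists (`|h|^-1 *: h) => //=.
  by rewrite normrZ normrV ?unitfE ?gt_eqF // normr_id mulVf ?gt_eqF.
by rewrite fc lee_fin linfunZ ler_pdivrMl // mulrC.
Qed.

End LinearFunctional.

Section L2Sum.
Variables (m : nat) (L : 'I_m -> H -> R).
Hypothesis L_linear : forall u c h1 h2, L u (c *: h1 + h2) = c * L u h1 + L u h2.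

Lemma l2sum_dual_norm_ge0 : (0 <= l2sum_dual_norm L)%E.
Proof.
apply: ereal_sup_ubound; exists (fun _ => 0).
  by rewrite /= big1 // => u _; rewrite normr0 expr0n.
by rewrite big1 // => u _; rewrite linfun0.
Qed.

Lemma dual_norm_le_l2sum u : (dual_norm (L u) <= l2sum_dual_norm L)%E.
Proof.
apply/ereal_supP => _ [h /= h_le1 <-]; apply: ereal_sup_ubound.
exists (fun v => if v == u then h else 0).
  rewrite /= (bigD1 u) //= eqxx big1 ?addr0; first by rewrite expr2 mulr_ile1.
  by move=> v /negbTE ->; rewrite normr0 expr0n.
by rewrite (bigD1 u) //= eqxx big1 ?addr0 // => v /negbTE ->; rewrite linfun0.
Qed.

Section FiniteDualNorms.
Variable c : 'I_m -> R.
Hypothesis dual_normL : forall u, dual_norm (L u) = (c u)%:E.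

Lemma l2sum_dual_norm_le : (l2sum_dual_norm L <= (Num.sqrt (\sum_u c u ^+ 2))%:E)%E.
Proof.
apply/ereal_supP => _ [h /= h_le1 <-]; rewrite lee_fin.
apply: le_trans (sum_mul_le_sqrt c h_le1).
by apply: ler_sum => u _; exact: le_dual_norm.
Qed.

Lemma l2sum_dual_norm_ge : ((Num.sqrt (\sum_u c u ^+ 2))%:E <= l2sum_dual_norm L)%E.
Proof.
set S := Num.sqrt _.
have S2 : S ^+ 2 = \sum_u c u ^+ 2.
  by rewrite sqr_sqrtr // sumr_ge0 // => u _; exact: sqr_ge0.
have [->|S_neq0] := eqVneq S 0; first exact: l2sum_dual_norm_ge0.
have S_gt0 : 0 < S by rewrite lt_neqAle eq_sym S_neq0 sqrtr_ge0.
have cS_ge0 u : 0 <= c u / S.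
  by apply: divr_ge0; [rewrite -lee_fin -dual_normL; exact: dual_norm_ge0 | exact: ltW].
have S_sum : \sum_u c u / S * c u = S.
  by under eq_bigr do rewrite mulrAC -expr2; rewrite -mulr_suml -S2 expr2 mulfK.
set K := \sum_u c u / S.
have K_ge0 : 0 <= K by exact: sumr_ge0.
(* Scaling near-maximizers of each [L u] by [c u / S] gives a unit vector. *)
have near_sup e : 0 < e -> ((S - e * K)%:E <= l2sum_dual_norm L)%E.
  move=> e_gt0.
  have approx u : exists h : H, `|h| <= 1 /\ c u - e < L u h.
    have : ((c u - e)%:E < dual_norm (L u))%E by rewrite dual_normL lte_fin ltrBlDr ltrDl.
    by move/ereal_sup_gt => [_ [h h_le1 <-]]; rewrite lte_fin; exists h.
  have [h hP] := choice approx.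
  apply: (@le_trans _ _ (\sum_u L u ((c u / S) *: h u))%:E); last first.
    apply: ereal_sup_ubound; exists (fun u => (c u / S) *: h u) => //=.
    apply: (@le_trans _ _ (\sum_u (c u / S) ^+ 2)).
      apply: ler_sum => u _; rewrite normrZ exprMn ger0_norm //.
      by rewrite ler_piMr ?sqr_ge0 // expr2 mulr_ile1 // (hP u).1.
    by under eq_bigr do rewrite expr_div_n; rewrite -mulr_suml -S2 mulfV // expf_neq0.
  have -> : S - e * K = \sum_u c u / S * (c u - e).
    under eq_bigr do rewrite mulrBr.
    by rewrite sumrB S_sum /K mulr_sumr; congr (_ - _); apply: eq_bigr => u _; rewrite mulrC.
  rewrite lee_fin; apply: ler_sum => u _.
  by rewrite linfunZ ?ler_wpM2l // ltW // (hP u).2.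
apply/lee_subgt0Pr => e e_gt0.
have e'_gt0 : 0 < e / (K + 1) by rewrite divr_gt0 // ltr_wpDl.
apply: le_trans (near_sup _ e'_gt0); rewrite -EFinB lee_fin lerD2l lerN2.
by rewrite mulrAC ler_pdivrMr ?ltr_wpDl // ler_pM2l // lerDl.
Qed.

Lemma l2sum_dual_normE :
  l2sum_dual_norm L = (Num.sqrt (\sum_u c u ^+ 2))%:E.
Proof. by apply/le_anti; rewrite l2sum_dual_norm_le l2sum_dual_norm_ge. Qed.

End FiniteDualNorms.

Lemma l2sum_dual_norm_sqr :
  (l2sum_dual_norm L * l2sum_dual_norm L
   = \sum_u dual_norm (L u) * dual_norm (L u))%E.
Proof.
have [fin|] := boolP [forall u, dual_norm (L u) \is a fin_num].
  pose c u := fine (dual_norm (L u)).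
  have dual_normL u : dual_norm (L u) = (c u)%:E by rewrite fineK // (forallP fin u).
  rewrite (l2sum_dual_normE dual_normL) -EFinM -expr2 sqr_sqrtr; last first.
    by apply: sumr_ge0 => u _; exact: sqr_ge0.
  by rewrite -sumEFin; apply: eq_bigr => u _; rewrite dual_normL -EFinM expr2.
case/forallPn => u; rewrite ge0_fin_numE ?dual_norm_ge0 // -leNgt leye_eq.
move=> /eqP u_oo; have := dual_norm_le_l2sum u; rewrite u_oo leye_eq => /eqP ->.
rewrite (bigD1 u) //= u_oo mulyy addye // gt_eqF // (lt_le_trans ltNy0) //.
by apply: sume_ge0 => v _; apply: mule_ge0; exact: dual_norm_ge0.
Qed.

End L2Sum.
End DualNorm.

Lemma separable_sum_min (R : realType) (I : finType) (T : Type)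
    (f : I -> T -> \bar R) (x : I -> T) :
  (forall i y, (0 <= f i y)%E) -> (\sum_i f i (x i) < +oo)%E ->
  (forall y : I -> T, (\sum_i f i (x i) <= \sum_i f i (y i))%E) ->
  forall i z, (f i (x i) <= f i z)%E.
Proof.
move=> f_ge0 sum_lty x_min i z.
set rest := (\sum_(j | j != i) f j (x j))%E.
have rest_fin : rest \is a fin_num.
  rewrite ge0_fin_numE ?sume_ge0 //; apply: le_lt_trans sum_lty.
  by rewrite (bigD1 i) //= leeDr.
have := x_min (fun j => if j == i then z else x j).
rewrite (bigD1 i) //= [X in (_ <= X)%E](bigD1 i) //= eqxx.
have -> : (\sum_(j | j != i) f j (if j == i then z else x j))%E = rest.
  by apply: eq_bigr => j /negbTE ->.
by rewrite leeD2rE.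
Qed.

Theorem lemma1 (R : realType) (H : normedModType R) (X : Type)
  (ev : H -> X -> R)
  (ev_linear : forall (c : R) (h1 h2 : H) (x : X),
      ev (c *: h1 + h2) x = c * ev h1 x + ev h2 x)
  (ev_inj : injective ev)
  (n tmax t : nat) (hn : (1 <= n)%N) (ht : (t <= tmax)%N)
  (Xs : 'I_n -> X) (iota : 'I_n -> 'I_t.+1 -> bool) (r : 'I_n -> 'I_t.+1 -> R)
  (sigma : R) (hsigma : 0 < sigma)
  (what : 'I_n -> 'I_t.+1 -> R)
  (hfin : (objfull ev Xs iota r sigma what < +oo)%E)
  (hmin : forall w : 'I_n -> 'I_t.+1 -> R,
      (objfull ev Xs iota r sigma what <= objfull ev Xs iota r sigma w)%E) :
  forall (u : 'I_t.+1) (wu : 'I_n -> R),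
    (obju ev Xs iota r sigma u (fun i => what i u)
     <= obju ev Xs iota r sigma u wu)%E.
Proof.
pose lin v (wv : 'I_n -> R) (h : H) := n%:R^-1 * \sum_(i < n)
  (r i v * ev h (Xs i) - (iota i v)%:R * r i v * wv i * ev h (Xs i)).
have lin_linear v wv c h1 h2 : lin v wv (c *: h1 + h2) = c * lin v wv h1 + lin v wv h2.
  rewrite /lin !mulr_sumr -big_split; apply: eq_bigr => i _ /=.
  by rewrite ev_linear; ring.
have objfull_sum w : objfull ev Xs iota r sigma w
    = (\sum_v obju ev Xs iota r sigma v (fun i => w i v))%E.
  rewrite /objfull.
  have -> : Ifull ev Xs iota r w = l2sum_dual_norm (fun v => lin v (fun i => w i v)).
    rewrite /Ifull /l2sum_dual_norm; congr ereal_sup; apply: eq_imagel => h _.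
    by rewrite exchange_big mulr_sumr.
  rewrite (l2sum_dual_norm_sqr (fun v => lin_linear v _)) big_split /=.
  by rewrite sumEFin exchange_big mulr_sumr.
move=> u wu.
apply: (@separable_sum_min _ _ _ (obju ev Xs iota r sigma) (fun v i => what i v)).
- move=> v y; apply: adde_ge0; first by apply: mule_ge0; exact: dual_norm_ge0 (lin_linear v y).
  rewrite lee_fin mulr_ge0 ?divr_ge0 ?sqr_ge0 ?mulr_ge0 //.
  apply: sumr_ge0 => i _.
  by rewrite mulr_ge0 ?sqr_ge0 // mulr_ge0 ?sqr_ge0.
- by rewrite -objfull_sum.
- by move=> y; rewrite -objfull_sum -(objfull_sum (fun i v => y v i)).
Qed.
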